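(* Let $M^2$ be a strongly regular minimal surface of general type in $\mathbb R^4$, parameterized by semi-canonical parameters $(u,v)$, with invariants $\mu,\nu$. Then the function $E\sqrt{|\mu^2-\nu^2|}$ does not depend on $v$, and the function $G\sqrt{|\mu^2-\nu^2|}$ does not depend on $u$.
   Context: $\mathbb R^4$ carries the standard metric $g=\langle\cdot,\cdot\rangle$ and flat connection $\nabla'$; everything is smooth and local. For a regular surface $M^2: z=z(u,v)$ let $E,F,G$ be the first fundamental form coefficients, $\sigma$ the second fundamental form, $K$ the Gauss curvature, and $\varkappa$ the curvature of the normal connection, $\varkappa=g(R^\perp(x,y)n_2,n_1)$ for a positively oriented orthonormal frame $(x,y,n_1,n_2)$ with $x,y$ tangent. Minimal means $\sigma(x,x)+\sigma(y,y)=0$ for orthonormal tangent $x,y$. A minimal surface is of general type if $K^2-\varkappa^2>0$ and $\varkappa\neq0$ everywhere. The ellipse of curvature at $p$ is $\{\sigma(v,v): v\in T_pM^2,\ |v|=1\}$; a tangent line is canonical if it is collinear with an axis of this ellipse. The geometric frame is a positively oriented orthonormal frame $\{x,y,n_1,n_2\}$ with $x,y$ canonical tangent fields and $n_1,n_2$ normal, satisfying $\nabla'_xx=\gamma_1y+\nu n_1$, $\nabla'_xy=-\gamma_1x+\mu n_2$, $\nabla'_yx=-\gamma_2y+\mu n_2$, $\nabla'_yy=\gamma_2x-\nu n_1$, $\nabla'_xn_1=-\nu x+\beta_1n_2$, $\nabla'_yn_1=\nu y+\beta_2n_2$, $\nabla'_xn_2=-\mu y-\beta_1n_1$, $\nabla'_yn_2=-\mu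 x-\beta_2n_1$, with $\mu>0$, $\nu\ne0$, $\mu^2\ne\nu^2$; the functions $\nu,\mu,\gamma_1,\gamma_2,\beta_1,\beta_2$ are the invariants of $M^2$. Parameters $(u,v)$ are semi-canonical if the parametric lines are integral curves of the canonical tangents, with $F=0$, $x=z_u/\sqrt E$, $y=z_v/\sqrt G$; then $\gamma_1=-y(\ln\sqrt E)$, $\gamma_2=-x(\ln\sqrt G)$. A minimal surface of general type is strongly regular if $\gamma_1\gamma_2\neq0$ everywhere. *)

From Stdlib Require Import Reals.
Open Scope R_scope.

Record R4 := mkR4 { c1 : R; c2 : R; c3 : R; c4 : R }.

Definition vadd (a b : R4) : R4 :=
  mkR4 (c1 a + c1 b) (c2 a + c2 b) (c3 a + c3 b) (c4 a + c4 b).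
Definition vscale (r : R) (a : R4) : R4 :=
  mkR4 (r * c1 a) (r * c2 a) (r * c3 a) (r * c4 a).
Definition vopp (a : R4) : R4 := vscale (-1) a.
Definition dot (a b : R4) : R :=
  c1 a * c1 b + c2 a * c2 b + c3 a * c3 b + c4 a * c4 b.

Definition det3 (a1 a2 a3 b1 b2 b3 d1 d2 d3 : R) : R :=
  a1 * (b2 * d3 - b3 * d2) - a2 * (b1 * d3 - b3 * d1) + a3 * (b1 * d2 - b2 * d1).

Definition det4 (a b c d : R4) : R :=
    c1 a * det3 (c2 b) (c3 b) (c4 b) (c2 c) (c3 c) (c4 c) (c2 d) (c3 d) (c4 d)
  - c2 a * det3 (c1 b) (c3 b) (c4 b) (c1 c) (c3 c) (c4 c) (c1 d) (c3 d) (c4 d)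
  + c3 a * det3 (c1 b) (c2 b) (c4 b) (c1 c) (c2 c) (c4 c) (c1 d) (c2 d) (c4 d)
  - c4 a * det3 (c1 b) (c2 b) (c3 b) (c1 c) (c2 c) (c3 c) (c1 d) (c2 d) (c3 d).

Definition domain := R -> R -> Prop.

Definition open_dom (U : domain) : Prop :=
  forall u v, U u v -> exists r, r > 0 /\
    forall u' v', Rabs (u' - u) < r -> Rabs (v' - v) < r -> U u' v'.

Definition pd_u (U : domain) (f g : R -> R -> R) : Prop :=
  forall u v, U u v -> derivable_pt_lim (fun t => f t v) u (g u v).
Definition pd_v (U : domain) (f g : R -> R -> R) : Prop :=
  forall u v, U u v -> derivable_pt_lim (fun t => f u t) v (g u v).

Definition cont2 (U : domain) (f : R -> R -> R) : Prop :=
  forall u v, U u v -> forall eps, eps > 0 -> exists delta, delta > 0 /\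
    forall u' v', Rabs (u' - u) < delta -> Rabs (v' - v) < delta ->
      Rabs (f u' v' - f u v) < eps.

Fixpoint Ck (k : nat) (U : domain) (f : R -> R -> R) : Prop :=
  match k with
  | O => cont2 U f
  | S k' => exists fu fv, pd_u U f fu /\ pd_v U f fv /\ Ck k' U fu /\ Ck k' U fv
  end.

Definition smooth (U : domain) (f : R -> R -> R) : Prop := forall k, Ck k U f.

Definition vsmooth (U : domain) (X : R -> R -> R4) : Prop :=
  smooth U (fun u v => c1 (X u v)) /\ smooth U (fun u v => c2 (X u v)) /\
  smooth U (fun u v => c3 (X u v)) /\ smooth U (fun u v => c4 (X u v)).

Definition vpd_u (U : domain) (X Y : R -> R -> R4) : Prop :=
  pd_u U (fun u v => c1 (X u v)) (fun u v => c1 (Y u v)) /\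
  pd_u U (fun u v => c2 (X u v)) (fun u v => c2 (Y u v)) /\
  pd_u U (fun u v => c3 (X u v)) (fun u v => c3 (Y u v)) /\
  pd_u U (fun u v => c4 (X u v)) (fun u v => c4 (Y u v)).
Definition vpd_v (U : domain) (X Y : R -> R -> R4) : Prop :=
  pd_v U (fun u v => c1 (X u v)) (fun u v => c1 (Y u v)) /\
  pd_v U (fun u v => c2 (X u v)) (fun u v => c2 (Y u v)) /\
  pd_v U (fun u v => c3 (X u v)) (fun u v => c3 (Y u v)) /\
  pd_v U (fun u v => c4 (X u v)) (fun u v => c4 (Y u v)).

(* zu, zv are the partial derivatives of z; first fundamental form *)
Definition fE (zu : R -> R -> R4) u v := dot (zu u v) (zu u v).
Definition fF (zu zv : R -> R -> R4) u v := dot (zu u v) (zv u v).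
Definition fG (zv : R -> R -> R4) u v := dot (zv u v) (zv u v).

Definition regular_surface (U : domain) (z zu zv : R -> R -> R4) : Prop :=
  open_dom U /\ vsmooth U z /\ vpd_u U z zu /\ vpd_v U z zv /\
  forall u v, U u v -> fE zu u v * fG zv u v - fF zu zv u v ^ 2 > 0.

(* Flat connection along the surface in semi-canonical parameters:
   since x = z_u/sqrt E and y = z_v/sqrt G, for a field X along M,
   nabla'_x X = (1/sqrt E) d_u X and nabla'_y X = (1/sqrt G) d_v X.
   [nabla_x U zu X Y] says nabla'_x X = Y on U; similarly [nabla_y]. *)
Definition nabla_x (U : domain) (zu : R -> R -> R4) (X Y : R -> R -> R4) : Prop :=
  vpd_u U X (fun u v => vscale (sqrt (fE zu u v)) (Y u v)).
Definition nabla_y (U : domain) (zv : R -> R -> R4) (X Y : R -> R -> R4) : Prop :=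
  vpd_v U X (fun u v => vscale (sqrt (fG zv u v)) (Y u v)).

Definition semi_canonical (U : domain) (zu zv x y : R -> R -> R4) : Prop :=
  forall u v, U u v ->
    fF zu zv u v = 0 /\
    x u v = vscale (/ sqrt (fE zu u v)) (zu u v) /\
    y u v = vscale (/ sqrt (fG zv u v)) (zv u v).

Definition lc2 (a : R) (X : R4) (b : R) (Y : R4) : R4 := vadd (vscale a X) (vscale b Y).

(* Geometric frame {x,y,n1,n2} of a minimal surface of general type with
   invariants nu, mu, g1 (=gamma_1), g2 (=gamma_2), b1 (=beta_1), b2 (=beta_2). *)
Definition geometric_frame (U : domain) (zu zv x y n1 n2 : R -> R -> R4)
    (nu mu g1 g2 b1 b2 : R -> R -> R) : Prop :=
  vsmooth U n1 /\ vsmooth U n2 /\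
  smooth U nu /\ smooth U mu /\ smooth U g1 /\ smooth U g2 /\
  smooth U b1 /\ smooth U b2 /\
  (forall u v, U u v ->
     dot (x u v) (x u v) = 1 /\ dot (y u v) (y u v) = 1 /\
     dot (n1 u v) (n1 u v) = 1 /\ dot (n2 u v) (n2 u v) = 1 /\
     dot (x u v) (y u v) = 0 /\ dot (x u v) (n1 u v) = 0 /\
     dot (x u v) (n2 u v) = 0 /\ dot (y u v) (n1 u v) = 0 /\
     dot (y u v) (n2 u v) = 0 /\ dot (n1 u v) (n2 u v) = 0 /\
     det4 (x u v) (y u v) (n1 u v) (n2 u v) > 0 /\
     mu u v > 0 /\ nu u v <> 0 /\ mu u v ^ 2 <> nu u v ^ 2) /\
  nabla_x U zu x (fun u v => lc2 (g1 u v) (y u v) (nu u v) (n1 u v)) /\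
  nabla_x U zu y (fun u v => lc2 (- g1 u v) (x u v) (mu u v) (n2 u v)) /\
  nabla_y U zv x (fun u v => lc2 (- g2 u v) (y u v) (mu u v) (n2 u v)) /\
  nabla_y U zv y (fun u v => lc2 (g2 u v) (x u v) (- nu u v) (n1 u v)) /\
  nabla_x U zu n1 (fun u v => lc2 (- nu u v) (x u v) (b1 u v) (n2 u v)) /\
  nabla_y U zv n1 (fun u v => lc2 (nu u v) (y u v) (b2 u v) (n2 u v)) /\
  nabla_x U zu n2 (fun u v => lc2 (- mu u v) (y u v) (- b1 u v) (n1 u v)) /\
  nabla_y U zv n2 (fun u v => lc2 (- mu u v) (x u v) (- b2 u v) (n1 u v)).

Definition strongly_regular (U : domain) (g1 g2 : R -> R -> R) : Prop :=
  forall u v, U u v -> g1 u v * g2 u v <> 0.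

(* Write a = sqrt E and b = sqrt G.  Then z_u = a x, z_v = b y, and the frame formulas
   say that d_u X = a nabla'_x X and d_v X = b nabla'_y X for every field X along the
   surface.  Expanding the identities d_v d_u X = d_u d_v X for X = z, n1, n2 with
   these formulas and taking the x- and y-components gives the structure equations
     a_v = -a b gamma1,              b_u = -a b gamma2,
     nu_v = b (2 gamma1 nu - beta1 mu),  nu_u = a (2 gamma2 nu + beta2 mu),
     mu_v = b (2 gamma1 mu - beta1 nu),  mu_u = a (2 gamma2 mu + beta2 nu).
   Hence E_v = -2 b gamma1 E while (mu^2 - nu^2)_v = 4 b gamma1 (mu^2 - nu^2): the
   factors E and sqrt|mu^2 - nu^2| have opposite logarithmic v-derivatives, so their
   product is stationary in v; symmetrically for G in u. *)

From Stdlib Require Import Reals Lra.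
From Coquelicot Require Import Rcomplements Hierarchy Continuity Derive Derive_2d ElemFct.
(* Defs is imported last so that its names (e.g. the coordinates c1..c4) are not
   shadowed by homonyms in Reals or Coquelicot. *)
From Pilot Require Import Defs.
Open Scope R_scope.

Lemma sign_mul_self (r : R) : sign r * r = Rabs r.
Proof.
  destruct (Rtotal_order r 0) as [Hr | [-> | Hr]].
  - rewrite sign_eq_m1, Rabs_left by exact Hr. ring.
  - rewrite sign_0, Rabs_R0. ring.
  - rewrite sign_eq_1, Rabs_right by lra. ring.
Qed.

Lemma derivable_pt_lim_sqrt_abs (g : R -> R) (x dg : R) :
  derivable_pt_lim g x dg -> g x <> 0 ->
  derivable_pt_lim (fun t => sqrt (Rabs (g t))) x (sign (g x) * dg / (2 * sqrt (Rabs (g x)))).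
Proof.
  intros Hg Hg0. apply is_derive_Reals, (is_derive_sqrt (fun t => Rabs (g t))).
  - apply is_derive_Rabs; [apply is_derive_Reals|]; assumption.
  - apply Rabs_pos_lt. exact Hg0.
Qed.

(* [derivable_pt_lim_opp] for a function written as a lambda term. *)
Lemma derivable_pt_lim_neg (f : R -> R) (x df : R) :
  derivable_pt_lim f x df -> derivable_pt_lim (fun t => - f t) x (- df).
Proof. exact (derivable_pt_lim_opp f x df). Qed.

Lemma derivable_pt_lim_sq_diff (m n : R -> R) (x dm dn : R) :
  derivable_pt_lim m x dm -> derivable_pt_lim n x dn ->
  derivable_pt_lim (fun t => m t ^ 2 - n t ^ 2) x (2 * (m x * dm - n x * dn)).
Proof.
  intros Hm Hn.
  replace (2 * (m x * dm - n x * dn)) with (INR 2 * dm * m x ^ 1 - INR 2 * dn * n x ^ 1)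
    by (simpl; ring).
  apply derivable_pt_lim_minus; apply is_derive_Reals, is_derive_pow, is_derive_Reals;
    assumption.
Qed.

Lemma stationary_product (f g : R -> R) (x df dg k : R) :
  derivable_pt_lim f x df -> derivable_pt_lim g x dg -> g x <> 0 ->
  df = - k * f x -> dg = 2 * k * g x ->
  derivable_pt_lim (fun t => f t * sqrt (Rabs (g t))) x 0.
Proof.
  intros Hf Hg Hg0 Edf Edg.
  assert (HS : 0 < sqrt (Rabs (g x))) by (apply sqrt_lt_R0, Rabs_pos_lt; exact Hg0).
  assert (HSS : sign (g x) * g x = sqrt (Rabs (g x)) * sqrt (Rabs (g x)))
    by (rewrite sign_mul_self, sqrt_sqrt by apply Rabs_pos; reflexivity).
  replace 0 with (df * sqrt (Rabs (g x))
                  + f x * (sign (g x) * dg / (2 * sqrt (Rabs (g x))))).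
  - apply (derivable_pt_lim_mult f (fun t => sqrt (Rabs (g t)))); [|apply derivable_pt_lim_sqrt_abs]; assumption.
  - rewrite Edf, Edg.
    replace (sign (g x) * (2 * k * g x)) with (2 * k * (sign (g x) * g x)) by ring.
    rewrite HSS. field. lra.
Qed.

Lemma open_dom_locally_2d (U : domain) (u v : R) : open_dom U -> U u v -> locally_2d U u v.
Proof.
  intros HU Huv. destruct (HU u v Huv) as (r & Hr & Hball).
  exists (mkposreal r Hr). exact Hball.
Qed.

Lemma open_dom_near_u (U : domain) (u v : R) (P : R -> Prop) :
  open_dom U -> U u v -> (forall s, U s v -> P s) -> locally u P.
Proof.
  intros HU Huv HP. apply filter_imp with (fun s => U s v); [exact HP|].
  apply locally_2d_1d_const_y, open_dom_locally_2d; assumption.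
Qed.

Lemma open_dom_near_v (U : domain) (u v : R) (P : R -> Prop) :
  open_dom U -> U u v -> (forall t, U u t -> P t) -> locally v P.
Proof.
  intros HU Huv HP. apply filter_imp with (fun t => U u t); [exact HP|].
  apply locally_2d_1d_const_x, open_dom_locally_2d; assumption.
Qed.

Lemma Derive_pd_u (U : domain) (f A : R -> R -> R) (s t : R) :
  pd_u U f A -> U s t -> Derive (fun z => f z t) s = A s t.
Proof. intros HA Hst. apply is_derive_unique, is_derive_Reals, HA, Hst. Qed.

Lemma Derive_pd_v (U : domain) (f B : R -> R -> R) (s t : R) :
  pd_v U f B -> U s t -> Derive (fun w => f s w) t = B s t.
Proof. intros HB Hst. apply is_derive_unique, is_derive_Reals, HB, Hst. Qed.

(* If A = f_u on U and t |-> A s t has derivative c at t, then so does the iterated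
   derivative t |-> Derive (f . t) s; openness of U makes the two functions agree near t. *)
Lemma is_derive_Derive_u (U : domain) (f A : R -> R -> R) (s t c : R) :
  open_dom U -> pd_u U f A -> U s t -> derivable_pt_lim (fun w => A s w) t c ->
  is_derive (fun w => Derive (fun z => f z w) s) t c.
Proof.
  intros HU HA Hst Hc. apply is_derive_ext_loc with (fun w => A s w).
  - apply (open_dom_near_v U s t); [exact HU | exact Hst |].
    intros w Hw. symmetry. apply (Derive_pd_u U); assumption.
  - apply is_derive_Reals. exact Hc.
Qed.

Lemma is_derive_Derive_v (U : domain) (f B : R -> R -> R) (s t c : R) :
  open_dom U -> pd_v U f B -> U s t -> derivable_pt_lim (fun z => B z t) s c ->
  is_derive (fun z => Derive (fun w => f z w) t) s c.
Proof.
  intros HU HB Hst Hc. apply is_derive_ext_loc with (fun z => B z t).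
  - apply (open_dom_near_u U s t); [exact HU | exact Hst |].
    intros z Hz. symmetry. apply (Derive_pd_v U); assumption.
  - apply is_derive_Reals. exact Hc.
Qed.

Lemma cont2_continuity_2d_pt (U : domain) (f : R -> R -> R) (u v : R) :
  cont2 U f -> U u v -> continuity_2d_pt f u v.
Proof.
  intros Hf Huv eps. destruct (Hf u v Huv eps (cond_pos eps)) as (d & Hd & Hball).
  exists (mkposreal d Hd). exact Hball.
Qed.

Lemma Ck2_mixed_partials_commute (U : domain) (f A B : R -> R -> R) (u v a b : R) :
  open_dom U -> Ck 2 U f -> pd_u U f A -> pd_v U f B -> U u v ->
  derivable_pt_lim (fun t => A u t) v a -> derivable_pt_lim (fun s => B s v) u b ->
  a = b.
Proof.
  intros HU (fu & fv & Hfu & Hfv & (fuu & fuv & _ & Hfuv & _ & Cuv)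
    & (fvu & fvv & Hfvu & _ & Cvu & _)) HA HB Huv Ha Hb.
  assert (HUloc := open_dom_locally_2d U u v HU Huv).
  assert (Euv : forall s t, U s t -> Derive (fun w => Derive (fun z => f z w) s) t = fuv s t)
    by (intros s t Hst; apply is_derive_unique, (is_derive_Derive_u U f fu); auto).
  assert (Evu : forall s t, U s t -> Derive (fun z => Derive (fun w => f z w) t) s = fvu s t)
    by (intros s t Hst; apply is_derive_unique, (is_derive_Derive_v U f fv); auto).
  transitivity (Derive (fun w => Derive (fun z => f z w) u) v);
    [symmetry; apply is_derive_unique, (is_derive_Derive_u U f A); assumption |].
  transitivity (Derive (fun z => Derive (fun w => f z w) v) u);
    [| apply is_derive_unique, (is_derive_Derive_v U f B); assumption].
  symmetry. apply Schwarz.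
  - apply locally_2d_impl with U; [apply locally_2d_forall | exact HUloc].
    intros s t Hst. repeat split.
    + exists (fu s t). apply is_derive_Reals, Hfu, Hst.
    + exists (fv s t). apply is_derive_Reals, Hfv, Hst.
    + exists (fvu s t). apply (is_derive_Derive_v U f fv); auto.
    + exists (fuv s t). apply (is_derive_Derive_u U f fu); auto.
  - apply continuity_2d_pt_ext_loc with fvu; [| apply (cont2_continuity_2d_pt U); assumption].
    apply locally_2d_impl with U; [apply locally_2d_forall | exact HUloc].
    intros s t Hst. symmetry. apply Evu, Hst.
  - apply continuity_2d_pt_ext_loc with fuv; [| apply (cont2_continuity_2d_pt U); assumption].
    apply locally_2d_impl with U; [apply locally_2d_forall | exact HUloc].
    intros s t Hst. symmetry. apply Euv, Hst.
Qed.

Lemma pd_u_derivable_v (U : domain) (f A : R -> R -> R) (u v : R) :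
  open_dom U -> Ck 2 U f -> pd_u U f A -> U u v ->
  exists d, derivable_pt_lim (fun t => A u t) v d.
Proof.
  intros HU (fu & fv & Hfu & _ & (fuu & fuv & _ & Hfuv & _) & _) HA Huv.
  exists (fuv u v). apply is_derive_Reals, is_derive_ext_loc with (fun t => fu u t).
  - apply (open_dom_near_v U u v); [exact HU | exact Huv |].
    intros t Hut. rewrite <- (Derive_pd_u U f fu), (Derive_pd_u U f A) by assumption.
    reflexivity.
  - apply is_derive_Reals, Hfuv, Huv.
Qed.

Lemma pd_v_derivable_u (U : domain) (f B : R -> R -> R) (u v : R) :
  open_dom U -> Ck 2 U f -> pd_v U f B -> U u v ->
  exists d, derivable_pt_lim (fun s => B s v) u d.
Proof.
  intros HU (fu & fv & _ & Hfv & _ & (fvu & fvv & Hfvu & _)) HB Huv.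
  exists (fvu u v). apply is_derive_Reals, is_derive_ext_loc with (fun s => fv s v).
  - apply (open_dom_near_u U u v); [exact HU | exact Huv |].
    intros s Hsv. rewrite <- (Derive_pd_v U f fv), (Derive_pd_v U f B) by assumption.
    reflexivity.
  - apply is_derive_Reals, Hfvu, Huv.
Qed.

Lemma smooth_derivable_u (U : domain) (f : R -> R -> R) (u v : R) :
  smooth U f -> U u v -> exists d, derivable_pt_lim (fun s => f s v) u d.
Proof. intros Hf Huv. destruct (Hf 1%nat) as (fu & _ & Hfu & _). exists (fu u v). auto. Qed.

Lemma smooth_derivable_v (U : domain) (f : R -> R -> R) (u v : R) :
  smooth U f -> U u v -> exists d, derivable_pt_lim (fun t => f u t) v d.
Proof. intros Hf Huv. destruct (Hf 1%nat) as (_ & fv & _ & Hfv & _). exists (fv u v). auto. Qed.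

Definition vderiv (X : R -> R4) (t : R) (D : R4) : Prop :=
  derivable_pt_lim (fun s => c1 (X s)) t (c1 D) /\
  derivable_pt_lim (fun s => c2 (X s)) t (c2 D) /\
  derivable_pt_lim (fun s => c3 (X s)) t (c3 D) /\
  derivable_pt_lim (fun s => c4 (X s)) t (c4 D).

Lemma vderiv_scale (f : R -> R) (X : R -> R4) (t df : R) (dX : R4) :
  derivable_pt_lim f t df -> vderiv X t dX ->
  vderiv (fun s => vscale (f s) (X s)) t (vadd (vscale df (X t)) (vscale (f t) dX)).
Proof.
  intros Hf (H1 & H2 & H3 & H4).
  repeat split; simpl; apply derivable_pt_lim_mult; assumption.
Qed.

Lemma vderiv_add (X Y : R -> R4) (t : R) (dX dY : R4) :
  vderiv X t dX -> vderiv Y t dY -> vderiv (fun s => vadd (X s) (Y s)) t (vadd dX dY).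
Proof.
  intros (H1 & H2 & H3 & H4) (K1 & K2 & K3 & K4).
  repeat split; simpl; apply derivable_pt_lim_plus; assumption.
Qed.

Lemma vderiv_lc2 (f g : R -> R) (X Y : R -> R4) (t df dg : R) (dX dY : R4) :
  derivable_pt_lim f t df -> vderiv X t dX -> derivable_pt_lim g t dg -> vderiv Y t dY ->
  vderiv (fun s => lc2 (f s) (X s) (g s) (Y s)) t
    (vadd (vadd (vscale df (X t)) (vscale (f t) dX)) (vadd (vscale dg (Y t)) (vscale (g t) dY))).
Proof.
  intros Hf HX Hg HY. unfold lc2.
  apply vderiv_add; apply vderiv_scale; assumption.
Qed.

Lemma vderiv_dot (X Y : R -> R4) (t : R) (dX dY : R4) :
  vderiv X t dX -> vderiv Y t dY ->
  derivable_pt_lim (fun s => dot (X s) (Y s)) t (dot dX (Y t) + dot (X t) dY).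
Proof.
  intros (H1 & H2 & H3 & H4) (K1 & K2 & K3 & K4). unfold dot.
  replace (_ + _) with
    ((c1 dX * c1 (Y t) + c1 (X t) * c1 dY) + (c2 dX * c2 (Y t) + c2 (X t) * c2 dY)
     + (c3 dX * c3 (Y t) + c3 (X t) * c3 dY) + (c4 dX * c4 (Y t) + c4 (X t) * c4 dY))
    by ring.
  repeat apply derivable_pt_lim_plus; apply derivable_pt_lim_mult; assumption.
Qed.

Lemma vpd_u_slice (U : domain) (X Y : R -> R -> R4) (s t : R) :
  vpd_u U X Y -> U s t -> vderiv (fun s' => X s' t) s (Y s t).
Proof. intros (H1 & H2 & H3 & H4) Hst. repeat split; auto. Qed.

Lemma vpd_v_slice (U : domain) (X Y : R -> R -> R4) (s t : R) :
  vpd_v U X Y -> U s t -> vderiv (fun t' => X s t') t (Y s t).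
Proof. intros (H1 & H2 & H3 & H4) Hst. repeat split; auto. Qed.

Lemma vmixed_partials_commute (U : domain) (X A B : R -> R -> R4) (u v : R) (DA DB : R4) :
  open_dom U -> vsmooth U X -> vpd_u U X A -> vpd_v U X B -> U u v ->
  vderiv (fun t => A u t) v DA -> vderiv (fun s => B s v) u DB -> DA = DB.
Proof.
  intros HU (S1 & S2 & S3 & S4) (A1 & A2 & A3 & A4) (B1 & B2 & B3 & B4) Huv
    (a1 & a2 & a3 & a4) (b1 & b2 & b3 & b4).
  destruct DA, DB; simpl in *. f_equal.
  - exact (Ck2_mixed_partials_commute U _ _ _ u v _ _ HU (S1 2%nat) A1 B1 Huv a1 b1).
  - exact (Ck2_mixed_partials_commute U _ _ _ u v _ _ HU (S2 2%nat) A2 B2 Huv a2 b2).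
  - exact (Ck2_mixed_partials_commute U _ _ _ u v _ _ HU (S3 2%nat) A3 B3 Huv a3 b3).
  - exact (Ck2_mixed_partials_commute U _ _ _ u v _ _ HU (S4 2%nat) A4 B4 Huv a4 b4).
Qed.

Lemma vpd_u_vderiv_v (U : domain) (X A : R -> R -> R4) (u v : R) :
  open_dom U -> vsmooth U X -> vpd_u U X A -> U u v ->
  exists D, vderiv (fun t => A u t) v D.
Proof.
  intros HU (S1 & S2 & S3 & S4) (A1 & A2 & A3 & A4) Huv.
  destruct (pd_u_derivable_v U _ _ u v HU (S1 2%nat) A1 Huv) as [d1 H1].
  destruct (pd_u_derivable_v U _ _ u v HU (S2 2%nat) A2 Huv) as [d2 H2].
  destruct (pd_u_derivable_v U _ _ u v HU (S3 2%nat) A3 Huv) as [d3 H3].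
  destruct (pd_u_derivable_v U _ _ u v HU (S4 2%nat) A4 Huv) as [d4 H4].
  exists (mkR4 d1 d2 d3 d4). repeat split; assumption.
Qed.

Lemma vpd_v_vderiv_u (U : domain) (X B : R -> R -> R4) (u v : R) :
  open_dom U -> vsmooth U X -> vpd_v U X B -> U u v ->
  exists D, vderiv (fun s => B s v) u D.
Proof.
  intros HU (S1 & S2 & S3 & S4) (B1 & B2 & B3 & B4) Huv.
  destruct (pd_v_derivable_u U _ _ u v HU (S1 2%nat) B1 Huv) as [d1 H1].
  destruct (pd_v_derivable_u U _ _ u v HU (S2 2%nat) B2 Huv) as [d2 H2].
  destruct (pd_v_derivable_u U _ _ u v HU (S3 2%nat) B3 Huv) as [d3 H3].
  destruct (pd_v_derivable_u U _ _ u v HU (S4 2%nat) B4 Huv) as [d4 H4].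
  exists (mkR4 d1 d2 d3 d4). repeat split; assumption.
Qed.

Lemma dot_comm (X Y : R4) : dot X Y = dot Y X.
Proof. unfold dot. ring. Qed.

Lemma dot_vadd_r (X Y Z : R4) : dot X (vadd Y Z) = dot X Y + dot X Z.
Proof. unfold dot, vadd. simpl. ring. Qed.

Lemma dot_vscale_r (X Y : R4) (r : R) : dot X (vscale r Y) = r * dot X Y.
Proof. unfold dot, vscale. simpl. ring. Qed.

#[local] Hint Rewrite dot_vadd_r dot_vscale_r : dot_expand.

Lemma dot_self_nonneg (X : R4) : 0 <= dot X X.
Proof. unfold dot. nra. Qed.

Lemma vscale_inv_cancel (r : R) (X : R4) : r <> 0 -> vscale r (vscale (/ r) X) = X.
Proof. intros Hr. destruct X. unfold vscale. simpl. f_equal; field; exact Hr. Qed.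

Lemma vpd_u_ext (U : domain) (X A A' : R -> R -> R4) :
  (forall s t, U s t -> A s t = A' s t) -> vpd_u U X A -> vpd_u U X A'.
Proof.
  intros E (H1 & H2 & H3 & H4).
  repeat split; intros s t Hst; rewrite <- (E s t Hst); auto.
Qed.

Lemma vpd_v_ext (U : domain) (X B B' : R -> R -> R4) :
  (forall s t, U s t -> B s t = B' s t) -> vpd_v U X B -> vpd_v U X B'.
Proof.
  intros E (H1 & H2 & H3 & H4).
  repeat split; intros s t Hst; rewrite <- (E s t Hst); auto.
Qed.

Section StructureEquations.

Variables (U : domain) (z zu zv x y n1 n2 : R -> R -> R4)
  (nu mu g1 g2 b1 b2 : R -> R -> R).
Hypothesis Hreg : regular_surface U z zu zv.
Hypothesis Hsc : semi_canonical U zu zv x y.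
Hypothesis Hgf : geometric_frame U zu zv x y n1 n2 nu mu g1 g2 b1 b2.

(* E and G are positive, since F = 0 and E G - F^2 > 0. *)
Lemma first_form_pos (s t : R) : U s t -> 0 < fE zu s t /\ 0 < fG zv s t.
Proof.
  intros Hst. destruct Hreg as (_ & _ & _ & _ & Hdet).
  specialize (Hdet s t Hst). destruct (Hsc s t Hst) as (HF & _ & _).
  rewrite HF in Hdet.
  pose proof (dot_self_nonneg (zu s t)). pose proof (dot_self_nonneg (zv s t)).
  unfold fE, fG in *. split; nra.
Qed.

Lemma zu_along_x : vpd_u U z (fun s t => vscale (sqrt (fE zu s t)) (x s t)).
Proof.
  destruct Hreg as (_ & _ & Hzu & _).
  apply vpd_u_ext with zu; [| exact Hzu].
  intros s t Hst. destruct (Hsc s t Hst) as (_ & -> & _).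
  symmetry. apply vscale_inv_cancel.
  apply Rgt_not_eq, sqrt_lt_R0, first_form_pos, Hst.
Qed.

Lemma zv_along_y : vpd_v U z (fun s t => vscale (sqrt (fG zv s t)) (y s t)).
Proof.
  destruct Hreg as (_ & _ & _ & Hzv & _).
  apply vpd_v_ext with zv; [| exact Hzv].
  intros s t Hst. destruct (Hsc s t Hst) as (_ & _ & ->).
  symmetry. apply vscale_inv_cancel.
  apply Rgt_not_eq, sqrt_lt_R0, first_form_pos, Hst.
Qed.

Variables (u v : R).
Hypothesis Huv : U u v.

Local Notation a := (sqrt (fE zu u v)).
Local Notation b := (sqrt (fG zv u v)).

Lemma sqrtE_pos : 0 < a.
Proof. apply sqrt_lt_R0, first_form_pos, Huv. Qed.

Lemma sqrtG_pos : 0 < b.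
Proof. apply sqrt_lt_R0, first_form_pos, Huv. Qed.

Lemma frame_orthonormal :
  dot (x u v) (x u v) = 1 /\ dot (y u v) (y u v) = 1 /\ dot (x u v) (y u v) = 0 /\
  dot (x u v) (n1 u v) = 0 /\ dot (x u v) (n2 u v) = 0 /\
  dot (y u v) (n1 u v) = 0 /\ dot (y u v) (n2 u v) = 0.
Proof.
  destruct Hgf as (_ & _ & _ & _ & _ & _ & _ & _ & Hframe & _).
  destruct (Hframe u v Huv) as (Hxx & Hyy & _ & _ & Hxy & Hxn1 & Hxn2 & Hyn1 & Hyn2 & _).
  repeat split; assumption.
Qed.

Lemma frame_derivatives :
  vderiv (fun s => x s v) u (vscale a (lc2 (g1 u v) (y u v) (nu u v) (n1 u v))) /\
  vderiv (fun s => y s v) u (vscale a (lc2 (- g1 u v) (x u v) (mu u v) (n2 u v))) /\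
  vderiv (fun t => x u t) v (vscale b (lc2 (- g2 u v) (y u v) (mu u v) (n2 u v))) /\
  vderiv (fun t => y u t) v (vscale b (lc2 (g2 u v) (x u v) (- nu u v) (n1 u v))) /\
  vderiv (fun s => n1 s v) u (vscale a (lc2 (- nu u v) (x u v) (b1 u v) (n2 u v))) /\
  vderiv (fun t => n1 u t) v (vscale b (lc2 (nu u v) (y u v) (b2 u v) (n2 u v))) /\
  vderiv (fun s => n2 s v) u (vscale a (lc2 (- mu u v) (y u v) (- b1 u v) (n1 u v))) /\
  vderiv (fun t => n2 u t) v (vscale b (lc2 (- mu u v) (x u v) (- b2 u v) (n1 u v))).
Proof.
  destruct Hgf as (_ & _ & _ & _ & _ & _ & _ & _ & _ & Nxu & Nyu & Nxv & Nyv
    & Nn1u & Nn1v & Nn2u & Nn2v).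
  repeat match goal with |- _ /\ _ => split end.
  - exact (vpd_u_slice U _ _ u v Nxu Huv).
  - exact (vpd_u_slice U _ _ u v Nyu Huv).
  - exact (vpd_v_slice U _ _ u v Nxv Huv).
  - exact (vpd_v_slice U _ _ u v Nyv Huv).
  - exact (vpd_u_slice U _ _ u v Nn1u Huv).
  - exact (vpd_v_slice U _ _ u v Nn1v Huv).
  - exact (vpd_u_slice U _ _ u v Nn2u Huv).
  - exact (vpd_v_slice U _ _ u v Nn2v Huv).
Qed.

(* From a vector identity E, derive its x-component Ex and its y-component Ey. *)
Ltac frame_coordinates E :=
  let Hxx := fresh in let Hyy := fresh in let Hxy := fresh in
  let Hxn1 := fresh in let Hxn2 := fresh in let Hyn1 := fresh in let Hyn2 := fresh in
  let Ex := fresh "Ex" in let Ey := fresh "Ey" in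
  destruct frame_orthonormal as (Hxx & Hyy & Hxy & Hxn1 & Hxn2 & Hyn1 & Hyn2);
  pose proof (f_equal (dot (x u v)) E) as Ex; pose proof (f_equal (dot (y u v)) E) as Ey;
  cbv beta in Ex, Ey; unfold lc2 in Ex, Ey; autorewrite with dot_expand in Ex, Ey;
  rewrite ?Hxx, ?Hxy, ?Hxn1, ?Hxn2 in Ex;
  rewrite ?(dot_comm (y u v) (x u v)), ?Hxy, ?Hyy, ?Hyn1, ?Hyn2 in Ey.

Variables (dE_v dG_u : R).
Hypothesis HE_v : derivable_pt_lim (fun t => fE zu u t) v dE_v.
Hypothesis HG_u : derivable_pt_lim (fun s => fG zv s v) u dG_u.

Lemma sqrtE_v : derivable_pt_lim (fun t => sqrt (fE zu u t)) v (dE_v / (2 * a)).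
Proof.
  apply is_derive_Reals, (is_derive_sqrt (fun t => fE zu u t)).
  - apply is_derive_Reals, HE_v.
  - apply first_form_pos, Huv.
Qed.

Lemma sqrtG_u : derivable_pt_lim (fun s => sqrt (fG zv s v)) u (dG_u / (2 * b)).
Proof.
  apply is_derive_Reals, (is_derive_sqrt (fun s => fG zv s v)).
  - apply is_derive_Reals, HG_u.
  - apply first_form_pos, Huv.
Qed.

(* d_v (a x) = d_u (b y) gives a_v = -a b gamma1 and b_u = -a b gamma2. *)
Lemma structure_z : dE_v / (2 * a) = - a * b * g1 u v /\ dG_u / (2 * b) = - a * b * g2 u v.
Proof.
  destruct frame_derivatives as (_ & Yu & Xv & _).
  destruct Hreg as (HU & Hz & _).
  pose proof (vmixed_partials_commute U z _ _ u v _ _ HU Hz zu_along_x zv_along_y Huv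
    (vderiv_scale _ _ _ _ _ sqrtE_v Xv) (vderiv_scale _ _ _ _ _ sqrtG_u Yu)) as E.
  frame_coordinates E. split; lra.
Qed.

Variables (dnu_v dnu_u dmu_v dmu_u db1_v db2_u : R).
Hypothesis Hnu_v : derivable_pt_lim (fun t => nu u t) v dnu_v.
Hypothesis Hnu_u : derivable_pt_lim (fun s => nu s v) u dnu_u.
Hypothesis Hmu_v : derivable_pt_lim (fun t => mu u t) v dmu_v.
Hypothesis Hmu_u : derivable_pt_lim (fun s => mu s v) u dmu_u.
Hypothesis Hb1_v : derivable_pt_lim (fun t => b1 u t) v db1_v.
Hypothesis Hb2_u : derivable_pt_lim (fun s => b2 s v) u db2_u.

(* d_v d_u n1 = d_u d_v n1 gives the derivatives of nu. *)
Lemma structure_n1 :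
  dnu_v = b * (2 * g1 u v * nu u v - b1 u v * mu u v) /\
  dnu_u = a * (2 * g2 u v * nu u v + b2 u v * mu u v).
Proof.
  destruct frame_derivatives as (_ & Yu & Xv & _ & _ & _ & N2u & N2v).
  destruct Hreg as (HU & _).
  destruct Hgf as (Hn1 & _ & _ & _ & _ & _ & _ & _ & _ & _ & _ & _ & _ & Nn1u & Nn1v & _).
  destruct structure_z as [Hav Hbu].
  pose proof sqrtE_pos as Ha. pose proof sqrtG_pos as Hb.
  pose proof (vmixed_partials_commute U n1 _ _ u v _ _ HU Hn1 Nn1u Nn1v Huv
    (vderiv_scale _ _ _ _ _ sqrtE_v
       (vderiv_lc2 _ _ _ _ _ _ _ _ _ (derivable_pt_lim_neg _ _ _ Hnu_v) Xv Hb1_v N2v))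
    (vderiv_scale _ _ _ _ _ sqrtG_u
       (vderiv_lc2 _ _ _ _ _ _ _ _ _ Hnu_u Yu Hb2_u N2u))) as E.
  frame_coordinates E. rewrite Hav in Ex. rewrite Hbu in Ey. split.
  - apply Rmult_eq_reg_l with a; lra.
  - apply Rmult_eq_reg_l with b; lra.
Qed.

(* d_v d_u n2 = d_u d_v n2 gives the derivatives of mu. *)
Lemma structure_n2 :
  dmu_v = b * (2 * g1 u v * mu u v - b1 u v * nu u v) /\
  dmu_u = a * (2 * g2 u v * mu u v + b2 u v * nu u v).
Proof.
  destruct frame_derivatives as (Xu & _ & _ & Yv & N1u & N1v & _).
  destruct Hreg as (HU & _).
  destruct Hgf as (_ & Hn2 & _ & _ & _ & _ & _ & _ & _ & _ & _ & _ & _ & _ & _ & Nn2u & Nn2v).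
  destruct structure_z as [Hav Hbu].
  pose proof sqrtE_pos as Ha. pose proof sqrtG_pos as Hb.
  pose proof (vmixed_partials_commute U n2 _ _ u v _ _ HU Hn2 Nn2u Nn2v Huv
    (vderiv_scale _ _ _ _ _ sqrtE_v
       (vderiv_lc2 _ _ _ _ _ _ _ _ _
          (derivable_pt_lim_neg _ _ _ Hmu_v) Yv (derivable_pt_lim_neg _ _ _ Hb1_v) N1v))
    (vderiv_scale _ _ _ _ _ sqrtG_u
       (vderiv_lc2 _ _ _ _ _ _ _ _ _
          (derivable_pt_lim_neg _ _ _ Hmu_u) Xu (derivable_pt_lim_neg _ _ _ Hb2_u) N1u))) as E.
  frame_coordinates E. rewrite Hav in Ex, Ey. rewrite Hbu in Ex, Ey. split.
  - apply Rmult_eq_reg_l with a; lra.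
  - apply Rmult_eq_reg_l with b; lra.
Qed.

Lemma mu2_minus_nu2_neq0 : mu u v ^ 2 - nu u v ^ 2 <> 0.
Proof.
  destruct Hgf as (_ & _ & _ & _ & _ & _ & _ & _ & Hframe & _).
  destruct (Hframe u v Huv) as (_ & _ & _ & _ & _ & _ & _ & _ & _ & _ & _ & _ & _ & Hmn).
  lra.
Qed.

(* E_v = -2 b gamma1 E and (mu^2 - nu^2)_v = 4 b gamma1 (mu^2 - nu^2). *)
Lemma E_sqrtD_stationary_v :
  derivable_pt_lim (fun t => fE zu u t * sqrt (Rabs (mu u t ^ 2 - nu u t ^ 2))) v 0.
Proof.
  pose proof sqrtE_pos as Ha.
  assert (HaE : a * a = fE zu u v) by apply sqrt_sqrt, dot_self_nonneg.
  destruct structure_z as [Hav _].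
  destruct structure_n1 as [Hnu _]. destruct structure_n2 as [Hmu _].
  apply (stationary_product _ _ v _ _ (2 * b * g1 u v) HE_v
           (derivable_pt_lim_sq_diff _ _ _ _ _ Hmu_v Hnu_v) mu2_minus_nu2_neq0).
  - replace dE_v with (2 * a * (dE_v / (2 * a))) by (field; lra).
    rewrite Hav. transitivity (- (2 * b * g1 u v) * (a * a)); [ring | rewrite HaE; reflexivity].
  - rewrite Hnu, Hmu. ring.
Qed.

(* G_u = -2 a gamma2 G and (mu^2 - nu^2)_u = 4 a gamma2 (mu^2 - nu^2). *)
Lemma G_sqrtD_stationary_u :
  derivable_pt_lim (fun s => fG zv s v * sqrt (Rabs (mu s v ^ 2 - nu s v ^ 2))) u 0.
Proof.
  pose proof sqrtG_pos as Hb.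
  assert (HbG : b * b = fG zv u v) by apply sqrt_sqrt, dot_self_nonneg.
  destruct structure_z as [_ Hbu].
  destruct structure_n1 as [_ Hnu]. destruct structure_n2 as [_ Hmu].
  apply (stationary_product _ _ u _ _ (2 * a * g2 u v) HG_u
           (derivable_pt_lim_sq_diff _ _ _ _ _ Hmu_u Hnu_u) mu2_minus_nu2_neq0).
  - replace dG_u with (2 * b * (dG_u / (2 * b))) by (field; lra).
    rewrite Hbu. transitivity (- (2 * a * g2 u v) * (b * b)); [ring | rewrite HbG; reflexivity].
  - rewrite Hnu, Hmu. ring.
Qed.

End StructureEquations.

Lemma fE_derivable_v (U : domain) (z zu zv : R -> R -> R4) (u v : R) :
  regular_surface U z zu zv -> U u v -> exists d, derivable_pt_lim (fun t => fE zu u t) v d.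
Proof.
  intros (HU & Hz & Hzu & _) Huv.
  destruct (vpd_u_vderiv_v U z zu u v HU Hz Hzu Huv) as [D HD].
  eexists. exact (vderiv_dot _ _ v _ _ HD HD).
Qed.

Lemma fG_derivable_u (U : domain) (z zu zv : R -> R -> R4) (u v : R) :
  regular_surface U z zu zv -> U u v -> exists d, derivable_pt_lim (fun s => fG zv s v) u d.
Proof.
  intros (HU & Hz & _ & Hzv & _) Huv.
  destruct (vpd_v_vderiv_u U z zv u v HU Hz Hzv Huv) as [D HD].
  eexists. exact (vderiv_dot _ _ u _ _ HD HD).
Qed.

Theorem lemma6p1 (U : domain) (z zu zv x y n1 n2 : R -> R -> R4)
    (nu mu g1 g2 b1 b2 : R -> R -> R) :
  regular_surface U z zu zv ->
  semi_canonical U zu zv x y ->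
  geometric_frame U zu zv x y n1 n2 nu mu g1 g2 b1 b2 ->
  strongly_regular U g1 g2 ->
  forall u v, U u v ->
    derivable_pt_lim
      (fun t => fE zu u t * sqrt (Rabs (mu u t ^ 2 - nu u t ^ 2))) v 0 /\
    derivable_pt_lim
      (fun s => fG zv s v * sqrt (Rabs (mu s v ^ 2 - nu s v ^ 2))) u 0.
Proof.
  intros Hreg Hsc Hgf _ u v Huv.
  pose proof Hgf as (_ & _ & Hnu & Hmu & _ & _ & Hb1 & Hb2 & _).
  destruct (fE_derivable_v U z zu zv u v Hreg Huv) as [dE_v HE_v].
  destruct (fG_derivable_u U z zu zv u v Hreg Huv) as [dG_u HG_u].
  destruct (smooth_derivable_v U nu u v Hnu Huv) as [dnu_v Hnu_v].
  destruct (smooth_derivable_u U nu u v Hnu Huv) as [dnu_u Hnu_u].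
  destruct (smooth_derivable_v U mu u v Hmu Huv) as [dmu_v Hmu_v].
  destruct (smooth_derivable_u U mu u v Hmu Huv) as [dmu_u Hmu_u].
  destruct (smooth_derivable_v U b1 u v Hb1 Huv) as [db1_v Hb1_v].
  destruct (smooth_derivable_u U b2 u v Hb2 Huv) as [db2_u Hb2_u].
  split.
  - eapply E_sqrtD_stationary_v; eassumption.
  - eapply G_sqrtD_stationary_u; eassumption.
Qed.
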